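(* Let $H$ be the (complete) history of an execution of the SC-ABD algorithm (described in the context), let $H^{lt}$ be its logical-time history, let $x$ be a register, and let $o_1,o_2$ be operations in $H^{lt}|x$ such that $o_1$ contains an update phase and $o_2$ contains a query phase. If $o_1 <_{H^{lt}|x} o_2$, then $ts(o_1)\le ts(o_2)$.
   Context: System model: $n$ processes $p_1,\dots,p_n$, $\Pi=\{1,\dots,n\}$, asynchronous, reliable links, crash-stop failures, at most $f<n/2$ faulty processes. Registers hold integers, initially $0$; operations READ($r$), WRITE($r,v$); each process has at most one outstanding operation. A history is the sequence of invocation/response events ordered by real time; only complete histories are considered. $H|x$ is the subsequence of events of operations targeting register $x$. For operations $o_1,o_2$ in a sequence $G$ of events, $o_1<_G o_2$ means the response event of $o_1$ precedes the invocation event of $o_2$ in $G$. Algorithm SC-ABD (code for $p_i$). Local variables: logical clock $lt$ (initially $0$); request id $rid$ (initially $0$); map $tvps$ from registers to timestamp-value pairs, initially $((0,0),0)$; set $responses$ (initially empty); boolean $reading$; temporaries $rreg,rval$. Timestamps are pairs (integer, process id), compared lexicographically; timestamp-value pairs are compared by timestamp (then value). Every message carries the sender's current $lt$; ''bcast $m$'' means send $m$ to every $p_j$, $j\in\Pi$. Handlers: - READ($r$) invoked: $lt\gets lt+1$; $reading\gets true$; $rreg\gets r$; $rid\gets rid+1$; bcast (''query'', $lt$, $rid$, $r$). - On (''query'', $lt'$, $rid'$, $r$) from $p_j$: $lt\gets\max(lt,lt')+1$; send (''response'', $lt$, $rid'$, $tvps[r]$) to $p_j$. - On (''response'', $lt'$,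 $rid'$, $tsv'$) from $p_j$ with $rid=rid'$: $lt\gets\max(lt,lt')+1$; $responses\gets responses\cup\{(tsv',j)\}$; if $|responses|=\lfloor n/2\rfloor+1$: let $tsv=(ts,rval)$ be the received pair with maximal timestamp; $responses\gets\{\}$; $rid\gets rid+1$; bcast (''update'', $lt$, $rid$, $rreg$, $tsv$). - WRITE($r,v$) invoked: $lt\gets lt+1$; $reading\gets false$; $tsv\gets((lt,i),v)$; $rid\gets rid+1$; bcast (''update'', $lt$, $rid$, $r$, $tsv$). - On (''update'', $lt'$, $rid'$, $r$, $tsv'$) from $p_j$: $lt\gets\max(lt,lt')+1$; $tvps[r]\gets\max(tvps[r],tsv')$; send (''ack'', $lt$, $rid'$) to $p_j$. - On (''ack'', $lt'$, $rid'$) from $p_j$ with $rid=rid'$: $lt\gets\max(lt,lt')+1$; $responses\gets responses\cup\{j\}$; if $|responses|=\lfloor n/2\rfloor+1$: $responses\gets\{\}$; $rid\gets rid+1$; if $reading$ return $rval$ else return OK. Phases: the query phase of a read is the broadcast of ''query'' messages and the collection of a majority of ''response'' messages; the update phase of an operation is the broadcast of ''update'' messages and the collection of a majority of ''ack'' messages. A write has only an update phase; a read has a query phase followed by an update phase. The timestamp $ts(o)$ of an operation $o$ is the timestamp in the pair broadcast in its update phase. Logical time: the logical time of a handler execution is the value assigned to $lt$ on its first line; the logical time of an invocation event is that of the invocation handler, and of a response event that of the handler that returns. The logical-time history $H^{lt}$ is the sequence of the events of $H$ reordered by their logical times, ties broken by the identifier of the process at which the event occurs. *)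

From Stdlib Require Import Arith ZArith List Bool.
Import ListNotations.

(* a timestamp is (integer, process id); registers are named by nat,
   values are integers (Z). *)
Definition ts := (nat * nat)%type.
Definition tsv := (ts * Z)%type.
Definition tsv_init : tsv := ((0, 0), 0%Z).

Definition ts_lt (a b : ts) : Prop :=
  fst a < fst b \/ (fst a = fst b /\ snd a < snd b).
Definition ts_le (a b : ts) : Prop := ts_lt a b \/ a = b.

Definition ts_ltb (a b : ts) : bool :=
  (fst a <? fst b) || ((fst a =? fst b) && (snd a <? snd b)).
Definition ts_eqb (a b : ts) : bool := (fst a =? fst b) && (snd a =? snd b).

Definition tsv_leb (a b : tsv) : bool :=
  ts_ltb (fst a) (fst b) || (ts_eqb (fst a) (fst b) && Z.leb (snd a) (snd b)).
Definition tsv_max (a b : tsv) : tsv := if tsv_leb a b then b else a.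
Definition tsv_eqb (a b : tsv) : bool := ts_eqb (fst a) (fst b) && Z.eqb (snd a) (snd b).

Definition list_max_tsv (l : list tsv) : tsv :=
  match l with
  | [] => tsv_init
  | t :: l' => fold_left tsv_max l' t
  end.

Inductive payload :=
| Query (rid : nat) (r : nat)
| Response (rid : nat) (t : tsv)
| Update (rid : nat) (r : nat) (t : tsv)
| Ack (rid : nat).

Record msg := mkM { src : nat; dst : nat; mlt : nat; pl : payload }.

Inductive entry :=
| EResp (t : tsv) (j : nat)
| EAck (j : nat).

Definition entry_eqb (a b : entry) : bool :=
  match a, b with
  | EResp t j, EResp t' j' => tsv_eqb t t' && (j =? j')
  | EAck j, EAck j' => j =? j'
  | _, _ => false
  end.

Definition set_add (e : entry) (l : list entry) : list entry :=
  if existsb (entry_eqb e) l then l else e :: l.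

Definition resp_tsvs (l : list entry) : list tsv :=
  flat_map (fun e => match e with EResp t _ => [t] | EAck _ => [] end) l.

Inductive opkind := ORead (r : nat) | OWrite (r : nat) (v : Z).
Definition op_reg (o : opkind) : nat := match o with ORead r => r | OWrite r _ => r end.

(* Operations are identified by (p, k): the k-th operation invoked by p.
   LInv / LResp are the invocation / response events of the history H,
   with their logical time; LQry p k marks the start (broadcast) of the
   query phase of operation (p,k); LUpd p k t marks the broadcast of the
   update phase of (p,k) with the pair t. *)
Inductive label :=
| LInv (p k lt : nat) (o : opkind)
| LResp (p k lt : nat) (res : option Z)   (* None = OK *)
| LQry (p k : nat)
| LUpd (p k : nat) (t : tsv).

Record lstate := mkL {
  lt : nat; rid : nat; tvps : nat -> tsv; resps : list entry;
  reading : bool; rreg : nat; rval : Z;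
  busy : bool;
  opcnt : nat;      (* ghost: number of operations invoked so far *)
  crashed : bool }.

Definition linit : lstate :=
  mkL 0 0 (fun _ => tsv_init) [] false 0 0%Z false 0 false.

Definition maj (n : nat) : nat := n / 2 + 1.

Definition bcast (n i l : nat) (p : payload) : list msg :=
  map (fun j => mkM i j l p) (seq 1 n).

Definition inv_read (n i r : nat) (s : lstate) : lstate * list msg * list label :=
  let k := opcnt s in
  let l := lt s + 1 in
  let rd := rid s + 1 in
  (mkL l rd (tvps s) (resps s) true r (rval s) true (k + 1) (crashed s),
   bcast n i l (Query rd r),
   [LInv i k l (ORead r); LQry i k]).

Definition inv_write (n i r : nat) (v : Z) (s : lstate) : lstate * list msg * list label :=
  let k := opcnt s in
  let l := lt s + 1 in
  let t : tsv := ((l, i), v) in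
  let rd := rid s + 1 in
  (mkL l rd (tvps s) (resps s) false (rreg s) (rval s) true (k + 1) (crashed s),
   bcast n i l (Update rd r t),
   [LInv i k l (OWrite r v); LUpd i k t]).

(* message m received at p_i (a message whose rid does not match is
   consumed without executing any handler) *)
Definition deliver (n i : nat) (s : lstate) (m : msg) : lstate * list msg * list label :=
  let l := Nat.max (lt s) (mlt m) + 1 in
  match pl m with
  | Query rd r =>
      (mkL l (rid s) (tvps s) (resps s) (reading s) (rreg s) (rval s)
           (busy s) (opcnt s) (crashed s),
       [mkM i (src m) l (Response rd (tvps s r))], [])
  | Response rd t =>
      if rid s =? rd then
        let rs := set_add (EResp t (src m)) (resps s) in
        if length rs =? maj n then
          let tm := list_max_tsv (resp_tsvs rs) in
          let rd' := rid s + 1 in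
          (mkL l rd' (tvps s) [] (reading s) (rreg s) (snd tm)
               (busy s) (opcnt s) (crashed s),
           bcast n i l (Update rd' (rreg s) tm),
           [LUpd i (opcnt s - 1) tm])
        else
          (mkL l (rid s) (tvps s) rs (reading s) (rreg s) (rval s)
               (busy s) (opcnt s) (crashed s), [], [])
      else (s, [], [])
  | Update rd r t =>
      let tv' := fun r' => if r' =? r then tsv_max (tvps s r) t else tvps s r' in
      (mkL l (rid s) tv' (resps s) (reading s) (rreg s) (rval s)
           (busy s) (opcnt s) (crashed s),
       [mkM i (src m) l (Ack rd)], [])
  | Ack rd =>
      if rid s =? rd then
        let rs := set_add (EAck (src m)) (resps s) in
        if length rs =? maj n then
          (mkL l (rid s + 1) (tvps s) [] (reading s) (rreg s) (rval s)
               false (opcnt s) (crashed s), [],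
           [LResp i (opcnt s - 1) l (if reading s then Some (rval s) else None)])
        else
          (mkL l (rid s) (tvps s) rs (reading s) (rreg s) (rval s)
               (busy s) (opcnt s) (crashed s), [], [])
      else (s, [], [])
  end.

Record config := mkC { loc : nat -> lstate; net : list msg }.

Definition updf (f : nat -> lstate) (i : nat) (s : lstate) : nat -> lstate :=
  fun j => if j =? i then s else f j.

Definition init_config : config := mkC (fun _ => linit) [].

Definition crash_st (s : lstate) : lstate :=
  mkL (lt s) (rid s) (tvps s) (resps s) (reading s) (rreg s) (rval s)
      (busy s) (opcnt s) true.

Inductive step (n : nat) : config -> list label -> config -> Prop :=
| StRead c i r s' ms ls :
    1 <= i <= n -> crashed (loc c i) = false -> busy (loc c i) = false ->
    inv_read n i r (loc c i) = (s', ms, ls) ->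
    step n c ls (mkC (updf (loc c) i s') (net c ++ ms))
| StWrite c i r v s' ms ls :
    1 <= i <= n -> crashed (loc c i) = false -> busy (loc c i) = false ->
    inv_write n i r v (loc c i) = (s', ms, ls) ->
    step n c ls (mkC (updf (loc c) i s') (net c ++ ms))
| StDeliver c pre m post s' ms ls :
    net c = pre ++ m :: post ->
    crashed (loc c (dst m)) = false ->
    deliver n (dst m) (loc c (dst m)) m = (s', ms, ls) ->
    step n c ls (mkC (updf (loc c) (dst m) s') (pre ++ post ++ ms))
| StCrash c i :
    1 <= i <= n -> crashed (loc c i) = false ->
    step n c [] (mkC (updf (loc c) i (crash_st (loc c i))) (net c)).

Inductive exec (n : nat) : config -> list label -> config -> Prop :=
| ExNil c : exec n c [] c
| ExCons c ls c' tr c'' :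
    step n c ls c' -> exec n c' tr c'' -> exec n c (ls ++ tr) c''.

Definition crashed_count (n : nat) (c : config) : nat :=
  length (filter (fun i => crashed (loc c i)) (seq 1 n)).

Definition complete (tr : list label) : Prop :=
  forall p k l o, In (LInv p k l o) tr -> exists l' res, In (LResp p k l' res) tr.

Definition op_on (tr : list label) (p k x : nat) : Prop :=
  exists l o, In (LInv p k l o) tr /\ op_reg o = x.

Definition contains_update_phase (tr : list label) (p k : nat) : Prop :=
  exists t, In (LUpd p k t) tr.
Definition contains_query_phase (tr : list label) (p k : nat) : Prop :=
  In (LQry p k) tr.

Definition ts_of (tr : list label) (p k : nat) (t : ts) : Prop :=
  exists tv, In (LUpd p k tv) tr /\ fst tv = t.

(* order of events in H^lt: by logical time, ties broken by process id *)
Definition lt_before (l1 p1 l2 p2 : nat) : Prop :=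
  l1 < l2 \/ (l1 = l2 /\ p1 < p2).

Definition precedes_lt (tr : list label) (p1 k1 p2 k2 : nat) : Prop :=
  exists l1 res l2 o, In (LResp p1 k1 l1 res) tr /\ In (LInv p2 k2 l2 o) tr /\
    lt_before l1 p1 l2 p2.

From Stdlib Require Import ZArith List Bool Lia.
Import ListNotations.

(* It follows from an inductive
   invariant over the configuration, the trace and three pieces of ghost state: a registry
   recording which phase (query or update, of which operation) each process opened with each
   request id, a log of acknowledgements (server [q] applied an update at its logical time [la])
   and a log of answers (server [q] answered a query at logical time [lr] with its current pair).
   Besides bookkeeping that ties messages, collected replies and trace labels to the registry,
   the invariant states that
   - the response of an operation is preceded by acknowledgements of its update phase from a
     majority of servers, all at logical times smaller than the response time;
   - the pair broadcast by the update phase of a read dominates the answers of a majority of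
     servers, all sent after the invocation of the read;
   - a server's pair for a register only grows, so an answer sent after an acknowledgement
     carries at least the acknowledged timestamp.
   If o1 responds before o2 is invoked in logical time, the two majorities share a server, which
   acknowledged the update of o1 before answering the query of o2; hence ts(o1) <= ts(o2). *)

Lemma ts_le_iff a b : ts_le a b <-> fst a < fst b \/ fst a = fst b /\ snd a <= snd b.
Proof.
  destruct a as [a1 a2], b as [b1 b2]; unfold ts_le, ts_lt; simpl; split.
  - intros [[H|[H1 H2]]|H]; [lia|lia|]. inversion H; lia.
  - intros [H|[H1 H2]]; [left; left; lia|].
    destruct (Nat.eq_dec a2 b2); [subst; right; reflexivity|left; right; lia].
Qed.

Lemma ts_le_refl a : ts_le a a.
Proof. right; reflexivity. Qed.

Lemma ts_le_trans a b c : ts_le a b -> ts_le b c -> ts_le a c.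
Proof. rewrite !ts_le_iff; lia. Qed.

Lemma tsv_max_cases a b :
  tsv_max a b = a /\ ts_le (fst b) (fst a) \/ tsv_max a b = b /\ ts_le (fst a) (fst b).
Proof.
  destruct a as [[a1 a2] av], b as [[b1 b2] bv].
  unfold tsv_max, tsv_leb, ts_ltb, ts_eqb; simpl.
  destruct (Nat.ltb_spec a1 b1), (Nat.eqb_spec a1 b1), (Nat.ltb_spec a2 b2),
    (Nat.eqb_spec a2 b2), (av <=? bv)%Z; simpl;
  first [right; split; [reflexivity|apply ts_le_iff; simpl; lia]
        |left; split; [reflexivity|apply ts_le_iff; simpl; lia]].
Qed.

Lemma tsv_max_ge_l a b : ts_le (fst a) (fst (tsv_max a b)).
Proof. destruct (tsv_max_cases a b) as [[-> _]|[-> H]]; [apply ts_le_refl|exact H]. Qed.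

Lemma tsv_max_ge_r a b : ts_le (fst b) (fst (tsv_max a b)).
Proof. destruct (tsv_max_cases a b) as [[-> H]|[-> _]]; [exact H|apply ts_le_refl]. Qed.

Lemma fold_tsv_max_ge l t u :
  In u (t :: l) -> ts_le (fst u) (fst (fold_left tsv_max l t)).
Proof.
  revert t u; induction l as [|a l IH]; intros t u Hu; simpl.
  - destruct Hu as [<-|[]]; apply ts_le_refl.
  - destruct Hu as [<-|[<-|Hu]].
    + eapply ts_le_trans; [apply tsv_max_ge_l|apply IH; left; reflexivity].
    + eapply ts_le_trans; [apply tsv_max_ge_r|apply IH; left; reflexivity].
    + apply IH; right; exact Hu.
Qed.

Lemma list_max_tsv_ge l u : In u l -> ts_le (fst u) (fst (list_max_tsv l)).
Proof. destruct l as [|t l]; [intros []|apply fold_tsv_max_ge]. Qed.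

Lemma NoDup_lists_meet {X} (eq_dec : forall x y : X, {x = y} + {x <> y}) (U S1 S2 : list X) :
  NoDup S1 -> NoDup S2 -> incl S1 U -> incl S2 U -> length U < length S1 + length S2 ->
  exists x, In x S1 /\ In x S2.
Proof.
  intros N1 N2 H1 H2 Hlen.
  destruct (Exists_dec (fun x => In x S2) S1 (fun x => in_dec eq_dec x S2)) as [E|E].
  - apply Exists_exists in E; exact E.
  - exfalso.
    assert (N : NoDup (S1 ++ S2)).
    { apply NoDup_app; auto. intros x Hx1 Hx2. apply E, Exists_exists; eauto. }
    pose proof (NoDup_incl_length N (incl_app H1 H2)). rewrite length_app in *. lia.
Qed.

Definition quorum (n : nat) (S : list nat) : Prop :=
  NoDup S /\ length S = maj n /\ forall q, In q S -> 1 <= q <= n.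

Lemma quorums_intersect n S1 S2 : quorum n S1 -> quorum n S2 -> exists q, In q S1 /\ In q S2.
Proof.
  intros [N1 [L1 R1]] [N2 [L2 R2]].
  apply (NoDup_lists_meet Nat.eq_dec (seq 1 n)); auto.
  - intros q Hq; apply in_seq; specialize (R1 q Hq); lia.
  - intros q Hq; apply in_seq; specialize (R2 q Hq); lia.
  - rewrite length_seq, L1, L2; unfold maj.
    pose proof (Nat.div_mod n 2 ltac:(lia)). pose proof (Nat.mod_upper_bound n 2 ltac:(lia)). lia.
Qed.

(* [QueryPhase k l r] is the query phase of the [k]-th operation of a process, a read of [r]
   invoked at logical time [l]; [UpdatePhase k r t] is the update phase of the [k]-th operation,
   broadcasting [t] for [r]. A [registry] maps a process and a request id to the phase the
   process opened with that id. *)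
Inductive phase :=
| QueryPhase (k l r : nat)
| UpdatePhase (k r : nat) (t : tsv).

Definition phase_op (ph : phase) : nat :=
  match ph with QueryPhase k _ _ | UpdatePhase k _ _ => k end.

Definition registry := nat -> nat -> option phase.

Definition registry_ext (g g' : registry) : Prop :=
  forall p rd ph, g p rd = Some ph -> g' p rd = Some ph.

Definition register (g : registry) (i rd0 : nat) (ph : phase) : registry :=
  fun p rd => if (p =? i) && (rd =? rd0) then Some ph else g p rd.

(* [AckEvent q p rd r t la]: server [q] applied the update [t] for [r] of request [rd] of [p]
   at its logical time [la]. [RespEvent q p rd r lr t]: [q] answered query [rd] of [p] on [r]
   at its logical time [lr] with its pair [t]. *)
Record ack_event := AckEvent {
  ack_server : nat; ack_client : nat; ack_rid : nat; ack_reg : nat; ack_tsv : tsv; ack_time : nat }.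

Record resp_event := RespEvent {
  resp_server : nat; resp_client : nat; resp_rid : nat; resp_reg : nat; resp_time : nat; resp_tsv : tsv }.

Definition entry_sender (e : entry) : nat := match e with EResp _ j | EAck j => j end.

Definition is_resp_from (q : nat) (e : entry) : bool :=
  match e with EResp _ j => j =? q | EAck _ => false end.

Definition query_round_msg (q p rd : nat) (m : msg) : bool :=
  match pl m with
  | Query rd' _ => (src m =? p) && (dst m =? q) && (rd' =? rd)
  | Response rd' _ => (src m =? q) && (dst m =? p) && (rd' =? rd)
  | _ => false
  end.

Definition msg_wf (n : nat) (g : registry) (A : list ack_event) (R : list resp_event) (m : msg) : Prop :=
  match pl m with
  | Query rd r => 1 <= src m <= n /\ 1 <= dst m <= n /\
      exists k, g (src m) rd = Some (QueryPhase k (mlt m) r)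
  | Response rd tv => 1 <= src m <= n /\ exists r, In (RespEvent (src m) (dst m) rd r (mlt m) tv) R
  | Update rd r tv => 1 <= dst m <= n /\ exists k, g (src m) rd = Some (UpdatePhase k r tv)
  | Ack rd => 1 <= src m <= n /\ exists r tv, In (AckEvent (src m) (dst m) rd r tv (mlt m)) A
  end.

Definition entry_wf (n : nat) (A : list ack_event) (R : list resp_event) (p : nat) (s : lstate)
    (e : entry) : Prop :=
  match e with
  | EResp tv q => 1 <= q <= n /\ exists r lr, In (RespEvent q p (rid s) r lr tv) R
  | EAck q => 1 <= q <= n /\ exists r tv la, la < lt s /\ In (AckEvent q p (rid s) r tv la) A
  end.

Definition label_proc (lab : label) : nat :=
  match lab with LInv p _ _ _ | LResp p _ _ _ | LQry p _ | LUpd p _ _ => p end.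
Definition label_op (lab : label) : nat :=
  match lab with LInv _ k _ _ | LResp _ k _ _ | LQry _ k | LUpd _ k _ => k end.

Definition queries_certified (n : nat) (tr : list label) (g : registry) (R : list resp_event) : Prop :=
  forall p k tv rd l r, In (LUpd p k tv) tr -> g p rd = Some (QueryPhase k l r) ->
  exists S, quorum n S /\ forall q, In q S ->
    exists lr tvq, l < lr /\ In (RespEvent q p rd r lr tvq) R /\ ts_le (fst tvq) (fst tv).

Definition responses_certified (n : nat) (tr : list label) (g : registry) (A : list ack_event) : Prop :=
  forall p k l res, In (LResp p k l res) tr ->
  exists rd r tv, g p rd = Some (UpdatePhase k r tv) /\
  exists S, quorum n S /\ forall q, In q S -> exists la, la < l /\ In (AckEvent q p rd r tv la) A.

Local Set Implicit Arguments.
Local Unset Strict Implicit.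

Record registry_inv (c : config) (tr : list label) (g : registry) : Prop := {
  registry_bound : forall p rd ph, g p rd = Some ph ->
    rd <= rid (loc c p) /\ phase_op ph < opcnt (loc c p);
  label_op_bound : forall lab, In lab tr -> label_op lab < opcnt (loc c (label_proc lab));
  invocation_unique : forall p k l o l' o',
    In (LInv p k l o) tr -> In (LInv p k l' o') tr -> l = l' /\ o = o';
  query_phase_invoked : forall p rd k l r,
    g p rd = Some (QueryPhase k l r) -> In (LInv p k l (ORead r)) tr;
  update_phase_invoked : forall p rd k r tv, g p rd = Some (UpdatePhase k r tv) ->
    exists l o, In (LInv p k l o) tr /\ op_reg o = r;
  update_phase_unique : forall p rd rd' k r r' tv tv',
    g p rd = Some (UpdatePhase k r tv) -> g p rd' = Some (UpdatePhase k r' tv') -> rd = rd';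
  query_phase_unique : forall p rd rd' k l r l' r',
    g p rd = Some (QueryPhase k l r) -> g p rd' = Some (QueryPhase k l' r') -> rd = rd';
  query_before_update : forall p rd rd' k l r r' tv,
    g p rd = Some (QueryPhase k l r) -> g p rd' = Some (UpdatePhase k r' tv) -> rd < rd';
  query_label_registered : forall p k, In (LQry p k) tr ->
    exists rd l r, g p rd = Some (QueryPhase k l r);
  update_label_registered : forall p k tv, In (LUpd p k tv) tr ->
    exists rd r, g p rd = Some (UpdatePhase k r tv)
}.

Record channel_inv (n : nat) (c : config) (g : registry) (A : list ack_event) (R : list resp_event)
  : Prop := {
  idle_clear : forall p, busy (loc c p) = false -> g p (rid (loc c p)) = None /\ resps (loc c p) = [];
  current_phase : forall p ph, g p (rid (loc c p)) = Some ph ->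
    busy (loc c p) = true /\ phase_op ph = opcnt (loc c p) - 1 /\
    (forall k l r, ph = QueryPhase k l r -> rreg (loc c p) = r);
  resps_wf : forall p e, In e (resps (loc c p)) -> entry_wf n A R p (loc c p) e;
  resps_senders_nodup : forall p, NoDup (map entry_sender (resps (loc c p)));
  (* The query of round [rd] of [p] to [q], the answer of [q] and that answer once collected
     exclude each other: this keeps the collected responders distinct although [set_add]
     compares whole entries. *)
  query_round_single : forall q p rd,
    length (filter (query_round_msg q p rd) (net c)) +
    (if rid (loc c p) =? rd then length (filter (is_resp_from q) (resps (loc c p))) else 0) <= 1;
  net_wf : forall m, In m (net c) -> msg_wf n g A R m
}.

Record witness_inv (n : nat) (c : config) (tr : list label) (g : registry) (A : list ack_event)
    (R : list resp_event) : Prop := {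
  acks_stored : forall a, In a A ->
    ack_time a <= lt (loc c (ack_server a)) /\
    ts_le (fst (ack_tsv a)) (fst (tvps (loc c (ack_server a)) (ack_reg a))) /\
    exists k, g (ack_client a) (ack_rid a) = Some (UpdatePhase k (ack_reg a) (ack_tsv a));
  responses_after_query : forall s, In s R ->
    resp_time s <= lt (loc c (resp_server s)) /\
    exists k l, g (resp_client s) (resp_rid s) = Some (QueryPhase k l (resp_reg s)) /\ l < resp_time s;
  responses_dominate_acks : forall a s, In a A -> In s R -> ack_server a = resp_server s ->
    ack_reg a = resp_reg s -> ack_time a < resp_time s -> ts_le (fst (ack_tsv a)) (fst (resp_tsv s));
  witness_queries : queries_certified n tr g R;
  witness_responses : responses_certified n tr g A
}.

Record abd_inv (n : nat) (c : config) (tr : list label) (g : registry) (A : list ack_event)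
    (R : list resp_event) : Prop := {
  inv_registry : registry_inv c tr g;
  inv_channel : channel_inv n c g A R;
  inv_witness : witness_inv n c tr g A R
}.

Local Unset Implicit Arguments.
Local Set Strict Implicit.

Lemma abd_inv_init n : abd_inv n init_config [] (fun _ _ => None) [] [].
Proof.
  split; split; simpl; intros; try tauto; try discriminate; try constructor.
  - destruct rd; simpl; lia.
  - intros ? ? ? ? [].
Qed.

Lemma abd_inv_precedes_ts_le {n c tr g A R x p1 k1 p2 k2} :
  abd_inv n c tr g A R ->
  op_on tr p1 k1 x -> op_on tr p2 k2 x ->
  contains_query_phase tr p2 k2 ->
  precedes_lt tr p1 k1 p2 k2 ->
  forall t1 t2, ts_of tr p1 k1 t1 -> ts_of tr p2 k2 t2 -> ts_le t1 t2.
Proof.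
  intros [IG _ IW] [lx1 [ox1 [Hx1 Ex1]]] [lx2 [ox2 [Hx2 Ex2]]] HQ [l1 [res [l2 [o [HR [HI Hlt]]]]]]
    t1 t2 [tv1 [HU1 <-]] [tv2 [HU2 <-]].
  destruct (update_label_registered IG HU1) as [rd1 [r1 G1]].
  destruct (witness_responses IW HR) as [rd [r [tv [G [S1 [Q1 HS1]]]]]].
  pose proof (update_phase_unique IG G1 G) as <-.
  rewrite G1 in G; injection G as <- <-.
  destruct (update_phase_invoked IG G1) as [l1' [o1' [HI1 Er1]]].
  destruct (invocation_unique IG Hx1 HI1) as [_ <-]. rewrite Ex1 in Er1; subst r1.
  destruct (query_label_registered IG HQ) as [rd2 [l2' [r2 G2]]].
  pose proof (query_phase_invoked IG G2) as HI2.
  destruct (invocation_unique IG HI HI2) as [<- _].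
  destruct (invocation_unique IG Hx2 HI2) as [_ ->]. simpl in Ex2; subst r2.
  destruct (witness_queries IW HU2 G2) as [S2 [Q2 HS2]].
  destruct (quorums_intersect n S1 S2 Q1 Q2) as [q [Hq1 Hq2]].
  destruct (HS1 q Hq1) as [la [Hla HA]].
  destruct (HS2 q Hq2) as [lr [tvq [Hlr [HRr Hle]]]].
  (* la < l1 <= l2 < lr *)
  assert (Hla_lr : la < lr) by (unfold lt_before in Hlt; lia).
  exact (ts_le_trans _ _ _ (responses_dominate_acks IW HA HRr eq_refl eq_refl Hla_lr) Hle).
Qed.

Lemma register_cases g i rd0 ph p rd ph' :
  register g i rd0 ph p rd = Some ph' -> p = i /\ rd = rd0 /\ ph' = ph \/ g p rd = Some ph'.
Proof.
  unfold register. destruct (Nat.eqb_spec p i), (Nat.eqb_spec rd rd0); simpl; auto.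
  intros H; injection H; auto.
Qed.

Lemma register_here g i rd0 ph : register g i rd0 ph i rd0 = Some ph.
Proof. unfold register; rewrite !Nat.eqb_refl; reflexivity. Qed.

Lemma register_ext g i rd0 ph : g i rd0 = None -> registry_ext g (register g i rd0 ph).
Proof.
  intros H0 p rd ph'; unfold register.
  destruct (Nat.eqb_spec p i), (Nat.eqb_spec rd rd0); simpl; subst; congruence.
Qed.

Lemma register_other g i rd0 ph p rd : p <> i -> register g i rd0 ph p rd = g p rd.
Proof. unfold register; intros H; apply Nat.eqb_neq in H; rewrite H; reflexivity. Qed.

Lemma updf_eq f i s : updf f i s i = s.
Proof. unfold updf; rewrite Nat.eqb_refl; reflexivity. Qed.

Lemma updf_neq f i s p : p <> i -> updf f i s p = f p.
Proof. unfold updf; intros H; apply Nat.eqb_neq in H; rewrite H; reflexivity. Qed.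

Ltac case_proc p i :=
  destruct (Nat.eq_dec p i) as [->|?Hne]; [rewrite ?updf_eq|rewrite ?updf_neq by auto]; simpl.

Definition lstate_mono (f f' : nat -> lstate) : Prop :=
  forall p, lt (f p) <= lt (f' p) /\ rid (f p) <= rid (f' p) /\ opcnt (f p) <= opcnt (f' p) /\
  forall r, ts_le (fst (tvps (f p) r)) (fst (tvps (f' p) r)).

Lemma lstate_mono_updf f i s :
  lt (f i) <= lt s -> rid (f i) <= rid s -> opcnt (f i) <= opcnt s ->
  (forall r, ts_le (fst (tvps (f i) r)) (fst (tvps s r))) -> lstate_mono f (updf f i s).
Proof.
  intros; intros p; case_proc p i; auto.
  repeat split; auto; intros; apply ts_le_refl.
Qed.

Lemma filter_none {X} (f : X -> bool) l : (forall x, In x l -> f x = false) -> filter f l = [].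
Proof. intros H; rewrite (filter_ext_in f (fun _ => false) l) by exact H; apply filter_false. Qed.

Lemma filter_length_pos {X} (f : X -> bool) l x : In x l -> f x = true -> 1 <= length (filter f l).
Proof.
  intros Hx Hf. destruct (filter f l) eqn:E; simpl; [|lia].
  assert (In x (filter f l)) by (apply filter_In; auto). rewrite E in H; destruct H.
Qed.

Lemma filter_eqb_nodup l q : NoDup l -> length (filter (fun j => j =? q) l) <= 1.
Proof.
  induction 1 as [|a l Ha _ IH]; simpl; [lia|].
  destruct (Nat.eqb_spec a q) as [->|]; simpl; [|exact IH].
  rewrite filter_none; [simpl; lia|].
  intros x Hx; apply Nat.eqb_neq; intros ->; contradiction.
Qed.

Lemma in_bcast n i l pl0 m :
  In m (bcast n i l pl0) -> src m = i /\ 1 <= dst m <= n /\ mlt m = l /\ pl m = pl0.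
Proof.
  unfold bcast; intros H; apply in_map_iff in H as [j [<- Hj]]; apply in_seq in Hj.
  simpl; repeat split; lia.
Qed.

Lemma bcast_query_round_msgs n i l rd0 r q p rd :
  length (filter (query_round_msg q p rd) (bcast n i l (Query rd0 r))) <=
  (if (p =? i) && (rd =? rd0) then 1 else 0).
Proof.
  unfold bcast. rewrite filter_map_swap, length_map. unfold query_round_msg; simpl.
  rewrite (Nat.eqb_sym p i), (Nat.eqb_sym rd rd0).
  destruct (i =? p), (rd0 =? rd); simpl.
  - erewrite filter_ext; [apply filter_eqb_nodup, seq_NoDup|]. intros; apply andb_true_r.
  - rewrite filter_none; simpl; auto. intros; apply andb_false_r.
  - rewrite filter_none; simpl; auto.
  - rewrite filter_none; simpl; auto.
Qed.

Lemma bcast_update_round_msgs n i l rd0 r tv q p rd :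
  filter (query_round_msg q p rd) (bcast n i l (Update rd0 r tv)) = [].
Proof. unfold bcast. rewrite filter_map_swap, filter_none; reflexivity. Qed.

Lemma in_app_insert (m x : msg) pre post : In x (pre ++ post) -> In x (pre ++ m :: post).
Proof. intros H; apply in_app_or in H as [H|H]; apply in_or_app; simpl; auto. Qed.

Lemma entry_wf_mono {n A A' R R' p s s' e} :
  entry_wf n A R p s e -> incl A A' -> incl R R' -> lt s <= lt s' -> rid s = rid s' ->
  entry_wf n A' R' p s' e.
Proof.
  intros H HA HR Hl Hr. destruct e; simpl in *; rewrite <- Hr.
  - destruct H as [? [r [lr ?]]]; eauto 6.
  - destruct H as [? [r [tv [la [? ?]]]]]. split; auto. exists r, tv, la; split; [lia|auto].
Qed.

Lemma registry_fresh {c tr g p rd} : registry_inv c tr g -> rid (loc c p) < rd -> g p rd = None.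
Proof.
  intros IG H. destruct (g p rd) eqn:E; auto.
  destruct (registry_bound IG E); lia.
Qed.

Lemma query_round_msgs_fresh {n c tr g A R} q {p rd} :
  abd_inv n c tr g A R -> rid (loc c p) < rd -> filter (query_round_msg q p rd) (net c) = [].
Proof.
  intros [IG IC IW] Hrd. apply filter_none. intros m Hm.
  destruct (query_round_msg q p rd m) eqn:E; auto. exfalso.
  pose proof (net_wf IC Hm) as N. unfold query_round_msg, msg_wf in *.
  destruct (pl m); try discriminate.
  - apply andb_prop in E as [E E3]; apply andb_prop in E as [E1 E2].
    apply Nat.eqb_eq in E1, E3; subst.
    destruct N as [_ [_ [k Hg]]]. destruct (registry_bound IG Hg). lia.
  - apply andb_prop in E as [E E3]; apply andb_prop in E as [E1 E2].
    apply Nat.eqb_eq in E2, E3; subst.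
    destruct N as [_ [r Hr]]. destruct (responses_after_query IW Hr) as [_ [k [l [Hg _]]]].
    destruct (registry_bound IG Hg). simpl in *. lia.
Qed.

Lemma registry_inv_mono {c c' tr g} :
  registry_inv c tr g -> lstate_mono (loc c) (loc c') -> registry_inv c' tr g.
Proof.
  intros IG M. split; try apply IG.
  - intros p rd ph H. destruct (registry_bound IG H). destruct (M p) as [_ [? [? _]]]. lia.
  - intros lab H. pose proof (label_op_bound IG H). destruct (M (label_proc lab)) as [_ [_ [? _]]]. lia.
Qed.

Lemma witness_inv_mono {n c c' tr g A R} :
  witness_inv n c tr g A R -> lstate_mono (loc c) (loc c') -> witness_inv n c' tr g A R.
Proof.
  intros IW M. split; try apply IW.
  - intros a Ha. destruct (acks_stored IW Ha) as [H1 [H2 H3]].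
    destruct (M (ack_server a)) as [M1 [_ [_ M4]]].
    repeat split; [lia|eapply ts_le_trans; eauto|exact H3].
  - intros s Hs. destruct (responses_after_query IW Hs) as [H1 H2].
    destruct (M (resp_server s)) as [M1 _]. split; [lia|exact H2].
Qed.

Lemma witness_inv_register n c tr g A R i rd0 ph :
  witness_inv n c tr g A R -> g i rd0 = None ->
  (forall k l r tv, ph = QueryPhase k l r -> ~ In (LUpd i k tv) tr) ->
  witness_inv n c tr (register g i rd0 ph) A R.
Proof.
  intros IW G0 Hph. pose proof (register_ext g i rd0 ph G0) as Gx. split; try apply IW.
  - intros a Ha. destruct (acks_stored IW Ha) as [H1 [H2 [k H3]]].
    repeat split; auto. exists k; apply Gx, H3.
  - intros s Hs. destruct (responses_after_query IW Hs) as [H1 [k [l [H2 H3]]]].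
    split; [exact H1|exists k, l; split; [apply Gx, H2|exact H3]].
  - intros p k tv rd l r Hl Hg. apply register_cases in Hg as [[-> [-> Hph']]|Hg].
    + destruct (Hph k l r tv (eq_sym Hph') Hl).
    + exact (witness_queries IW Hl Hg).
  - intros p k l res Hl. destruct (witness_responses IW Hl) as [rd [r [tv [Hg HS]]]].
    exists rd, r, tv; split; [apply Gx, Hg|exact HS].
Qed.

Lemma witness_inv_app n c tr ls g A R :
  witness_inv n c tr g A R -> queries_certified n ls g R -> responses_certified n ls g A ->
  witness_inv n c (tr ++ ls) g A R.
Proof.
  intros IW HQ HR. split; try apply IW.
  - intros p k tv rd l r Hl.
    apply in_app_or in Hl as [Hl|Hl]; [apply (witness_queries IW Hl)|apply (HQ _ _ _ _ _ _ Hl)].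
  - intros p k l res Hl.
    apply in_app_or in Hl as [Hl|Hl]; [apply (witness_responses IW Hl)|apply (HR _ _ _ _ Hl)].
Qed.

Lemma witness_inv_add_resp n c tr g A R ev :
  witness_inv n c tr g A R ->
  resp_time ev <= lt (loc c (resp_server ev)) ->
  (exists k l, g (resp_client ev) (resp_rid ev) = Some (QueryPhase k l (resp_reg ev)) /\ l < resp_time ev) ->
  (forall a, In a A -> ack_server a = resp_server ev -> ack_reg a = resp_reg ev ->
     ack_time a < resp_time ev -> ts_le (fst (ack_tsv a)) (fst (resp_tsv ev))) ->
  witness_inv n c tr g A (ev :: R).
Proof.
  intros IW H1 H2 H3. split; try apply IW.
  - intros s [<-|Hs]; [auto|apply (responses_after_query IW Hs)].
  - intros a s Ha [<-|Hs]; [auto|apply (responses_dominate_acks IW Ha Hs)].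
  - intros p k tv rd l r Hl Hg. destruct (witness_queries IW Hl Hg) as [S [Q HS]].
    exists S; split; auto. intros q Hq; destruct (HS q Hq) as [lr [tvq [? [? ?]]]].
    exists lr, tvq; simpl; auto.
Qed.

Lemma witness_inv_add_ack n c tr g A R ev :
  witness_inv n c tr g A R ->
  ack_time ev <= lt (loc c (ack_server ev)) ->
  ts_le (fst (ack_tsv ev)) (fst (tvps (loc c (ack_server ev)) (ack_reg ev))) ->
  (exists k, g (ack_client ev) (ack_rid ev) = Some (UpdatePhase k (ack_reg ev) (ack_tsv ev))) ->
  (forall s, In s R -> ack_server ev = resp_server s -> ack_reg ev = resp_reg s ->
     ack_time ev < resp_time s -> ts_le (fst (ack_tsv ev)) (fst (resp_tsv s))) ->
  witness_inv n c tr g (ev :: A) R.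
Proof.
  intros IW H1 H2 H3 H4. split; try apply IW.
  - intros a [<-|Ha]; [auto|apply (acks_stored IW Ha)].
  - intros a s [<-|Ha] Hs; [auto|apply (responses_dominate_acks IW Ha Hs)].
  - intros p k l res Hl. destruct (witness_responses IW Hl) as [rd [r [tv [Hg [S [Q HS]]]]]].
    exists rd, r, tv; split; auto. exists S; split; auto.
    intros q Hq; destruct (HS q Hq) as [la [? ?]]. exists la; simpl; auto.
Qed.

Lemma msg_wf_mono {n g g' A A' R R' m} :
  registry_ext g g' -> incl A A' -> incl R R' -> msg_wf n g A R m -> msg_wf n g' A' R' m.
Proof.
  unfold msg_wf. intros Gx HA HR. destruct (pl m).
  - intros [? [? [k ?]]]; eauto.
  - intros [? [r ?]]; eauto.
  - intros [? [k ?]]; eauto.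
  - intros [? [r [tv ?]]]; eauto.
Qed.

Definition round_preserved (s s' : lstate) : Prop :=
  rid s' = rid s /\ resps s' = resps s /\ busy s' = busy s /\ opcnt s' = opcnt s /\
  rreg s' = rreg s /\ lt s <= lt s'.

Lemma channel_inv_local_step {n c c' g A A' R R'} :
  channel_inv n c g A R ->
  (forall p, round_preserved (loc c p) (loc c' p)) -> incl A A' -> incl R R' ->
  (forall q p rd, length (filter (query_round_msg q p rd) (net c')) <=
                  length (filter (query_round_msg q p rd) (net c))) ->
  (forall m, In m (net c') -> msg_wf n g A' R' m) ->
  channel_inv n c' g A' R'.
Proof.
  intros IC E HA HR Hc Hn. split; try exact Hn.
  - intros p; destruct (E p) as (-> & -> & -> & _ & _ & _); apply IC.
  - intros p ph; destruct (E p) as (-> & _ & -> & -> & -> & _); apply IC.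
  - intros p e; destruct (E p) as (Er & -> & _ & _ & _ & El); intros He.
    apply (entry_wf_mono (resps_wf IC He)); auto.
  - intros p; destruct (E p) as (_ & -> & _); apply IC.
  - intros q p rd; destruct (E p) as (-> & -> & _).
    pose proof (query_round_single IC q p rd). specialize (Hc q p rd). lia.
Qed.

Lemma abd_inv_local_step {n c c' tr g A R} :
  abd_inv n c tr g A R -> lstate_mono (loc c) (loc c') ->
  (forall p, round_preserved (loc c p) (loc c' p)) -> incl (net c') (net c) ->
  (forall q p rd, length (filter (query_round_msg q p rd) (net c')) <=
                  length (filter (query_round_msg q p rd) (net c))) ->
  abd_inv n c' tr g A R.
Proof.
  intros [IG IC IW] M E Hn Hc.
  split; [exact (registry_inv_mono IG M)| |exact (witness_inv_mono IW M)].
  apply (channel_inv_local_step IC E (incl_refl A) (incl_refl R) Hc).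
  intros m Hm; apply IC, Hn, Hm.
Qed.

Lemma abd_inv_crash n c tr g A R i :
  abd_inv n c tr g A R -> abd_inv n (mkC (updf (loc c) i (crash_st (loc c i))) (net c)) tr g A R.
Proof.
  intros I; apply (abd_inv_local_step I); simpl; auto using incl_refl.
  - apply lstate_mono_updf; simpl; auto using ts_le_refl.
  - intros p; case_proc p i; repeat split; auto.
Qed.

Lemma abd_inv_discard n c tr g A R pre m post :
  abd_inv n c tr g A R -> net c = pre ++ m :: post ->
  abd_inv n (mkC (updf (loc c) (dst m) (loc c (dst m))) (pre ++ post)) tr g A R.
Proof.
  intros I Hn; apply (abd_inv_local_step I); simpl.
  - apply lstate_mono_updf; auto using ts_le_refl.
  - intros p; case_proc p (dst m); repeat split; auto.
  - rewrite Hn; intros x; apply in_app_insert.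
  - intros q p rd. rewrite Hn, !filter_app, !length_app; simpl.
    destruct (query_round_msg q p rd m); simpl; lia.
Qed.

Definition phase_payload (rd : nat) (ph : phase) : payload :=
  match ph with QueryPhase _ _ r => Query rd r | UpdatePhase _ r tv => Update rd r tv end.

Definition phase_label (i : nat) (ph : phase) : label :=
  match ph with QueryPhase k _ _ => LQry i k | UpdatePhase k _ tv => LUpd i k tv end.

Lemma phase_label_proc i ph : label_proc (phase_label i ph) = i.
Proof. destruct ph; reflexivity. Qed.

Lemma phase_label_op i ph : label_op (phase_label i ph) = phase_op ph.
Proof. destruct ph; reflexivity. Qed.

Lemma bcast_phase_round_msgs n i l rd0 ph q p rd :
  length (filter (query_round_msg q p rd) (bcast n i l (phase_payload rd0 ph))) <=
  (if (p =? i) && (rd =? rd0) then 1 else 0).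
Proof.
  destruct ph; simpl; [apply bcast_query_round_msgs|].
  rewrite bcast_update_round_msgs; simpl; lia.
Qed.

Definition invokes (o : opkind) (l : nat) (ph : phase) : Prop :=
  match ph with QueryPhase _ l' r => l' = l /\ o = ORead r | UpdatePhase _ r _ => op_reg o = r end.

Section Invoke.
Variables (n : nat) (c : config) (tr : list label) (g : registry) (A : list ack_event)
  (R : list resp_event) (i : nat) (reading0 : bool) (rreg0 : nat) (o : opkind) (ph : phase).
Hypothesis I : abd_inv n c tr g A R.
Hypothesis Hi : 1 <= i <= n.
Hypothesis Hidle : busy (loc c i) = false.

Let s := loc c i.
Let l := lt s + 1.
Let s' := mkL l (rid s + 1) (tvps s) (resps s) reading0 rreg0 (rval s) true (opcnt s + 1) (crashed s).
Let c' := mkC (updf (loc c) i s') (net c ++ bcast n i l (phase_payload (rid s + 1) ph)).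
Let g' := register g i (rid s + 1) ph.
Let tr' := tr ++ [LInv i (opcnt s) l o; phase_label i ph].

Hypothesis Hph_op : phase_op ph = opcnt s.
Hypothesis Hph_reg : forall k l' r, ph = QueryPhase k l' r -> rreg0 = r.
Hypothesis Hinvokes : invokes o l ph.

Let M : lstate_mono (loc c) (loc c').
Proof. apply lstate_mono_updf; unfold s', l, s; simpl; try lia; intros; apply ts_le_refl. Qed.

Let G0 : g i (rid s + 1) = None.
Proof. apply (registry_fresh (inv_registry I)); unfold s; lia. Qed.

Let in_tr' lab : In lab tr' -> In lab tr \/ lab = LInv i (opcnt s) l o \/ lab = phase_label i ph.
Proof. intros H; apply in_app_or in H as [H|[H|[H|[]]]]; auto. Qed.

Let old_phase_op rd ph' : g i rd = Some ph' -> phase_op ph' < opcnt s.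
Proof. intros H; apply (registry_bound (inv_registry I) H). Qed.

Let old_label_op lab : In lab tr -> label_proc lab = i -> label_op lab < opcnt s.
Proof. intros H <-; apply (label_op_bound (inv_registry I) H). Qed.

Let register_same_op {p rd rd' ph1 ph2} :
  g' p rd = Some ph1 -> g' p rd' = Some ph2 -> phase_op ph1 = phase_op ph2 ->
  rd = rd' /\ ph1 = ph2 \/ g p rd = Some ph1 /\ g p rd' = Some ph2.
Proof.
  intros H1 H2 Hop.
  apply register_cases in H1 as [(-> & -> & ->)|H1];
    apply register_cases in H2 as [(E & -> & ->)|H2]; auto.
  - specialize (old_phase_op _ _ H2). lia.
  - subst p. specialize (old_phase_op _ _ H1). lia.
Qed.

Lemma registry_inv_invoke : registry_inv c' tr' g'.
Proof.
  destruct I as [IG _ _]. pose proof (registry_inv_mono IG M) as IG'.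
  split.
  - intros p rd ph' H. apply register_cases in H as [(-> & -> & ->)|H].
    + simpl; rewrite updf_eq; simpl; rewrite Hph_op; lia.
    + apply (registry_bound IG' H).
  - intros lab H. apply in_tr' in H as [H|[ -> | -> ]]; [apply (label_op_bound IG' H)| |];
      [|rewrite (phase_label_op i ph), (phase_label_proc i ph)]; simpl; rewrite updf_eq; simpl; lia.
  - intros p k l1 o1 l2 o2 H1 H2.
    apply in_tr' in H1 as [H1|[H1|H1]]; apply in_tr' in H2 as [H2|[H2|H2]];
      try (destruct ph; discriminate).
    + exact (invocation_unique IG H1 H2).
    + injection H2 as -> -> _ _. specialize (old_label_op _ H1 eq_refl); simpl in *; lia.
    + injection H1 as -> -> _ _. specialize (old_label_op _ H2 eq_refl); simpl in *; lia.
    + injection H1; injection H2; intros; subst; auto.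
  - intros p rd k l1 r H. apply register_cases in H as [(-> & -> & Eph)|H].
    + rewrite <- Eph in Hinvokes, Hph_op. simpl in Hph_op; subst k.
      destruct Hinvokes as [-> ->]. apply in_or_app; simpl; auto.
    + apply in_or_app; left; exact (query_phase_invoked IG H).
  - intros p rd k r tv H. apply register_cases in H as [(-> & -> & Eph)|H].
    + rewrite <- Eph in Hinvokes, Hph_op. simpl in Hph_op; subst k.
      exists l, o. split; [apply in_or_app; simpl; auto|exact Hinvokes].
    + destruct (update_phase_invoked IG H) as [l1 [o1 [Hl Ho]]].
      exists l1, o1; split; [apply in_or_app|]; auto.
  - intros p rd rd' k r r' tv tv' H1 H2.
    destruct (register_same_op H1 H2 eq_refl) as [[-> _]|[H1' H2']];
      [reflexivity|exact (update_phase_unique IG H1' H2')].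
  - intros p rd rd' k l1 r l' r' H1 H2.
    destruct (register_same_op H1 H2 eq_refl) as [[-> _]|[H1' H2']];
      [reflexivity|exact (query_phase_unique IG H1' H2')].
  - intros p rd rd' k l1 r r' tv H1 H2.
    destruct (register_same_op H1 H2 eq_refl) as [[_ E]|[H1' H2']];
      [discriminate E|exact (query_before_update IG H1' H2')].
  - intros p k H. apply in_tr' in H as [H|[H|H]]; [|discriminate|].
    + destruct (query_label_registered IG H) as [rd [l1 [r Hg]]].
      exists rd, l1, r. apply register_ext; auto.
    + destruct ph as [k' l' r|]; [|discriminate]. injection H as -> <-.
      exists (rid s + 1), l', r. apply register_here.
  - intros p k tv H. apply in_tr' in H as [H|[H|H]]; [|discriminate|].
    + destruct (update_label_registered IG H) as [rd [r Hg]].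
      exists rd, r. apply register_ext; auto.
    + destruct ph as [|k' r tv']; [discriminate|]. injection H as -> <- <-.
      exists (rid s + 1), r. apply register_here.
Qed.

Lemma channel_inv_invoke : channel_inv n c' g' A R.
Proof.
  destruct I as [IG IC IW].
  destruct (idle_clear IC Hidle) as [Gi Ri]. fold s in Gi, Ri.
  split; simpl.
  - intros p. case_proc p i; [discriminate|].
    intros Hb. destruct (idle_clear IC Hb). unfold g'; rewrite register_other; auto.
  - intros p ph'. case_proc p i.
    + unfold g'; rewrite register_here. intros H; injection H as <-.
      repeat split; [rewrite Hph_op; lia|exact Hph_reg].
    + unfold g'; rewrite register_other by auto. apply IC.
  - intros p e. case_proc p i; [rewrite Ri; intros []|apply IC].
  - intros p. case_proc p i; [rewrite Ri; constructor|apply IC].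
  - intros q p rd. rewrite filter_app, length_app.
    pose proof (bcast_phase_round_msgs n i l (rid s + 1) ph q p rd) as B.
    pose proof (query_round_single IC q p rd) as C.
    case_proc p i.
    + rewrite Nat.eqb_refl in B. fold s in C |- *. rewrite Ri in *; simpl in *.
      destruct (Nat.eqb_spec rd (rid s + 1)) as [->|E].
      * rewrite (query_round_msgs_fresh q I) by (unfold s; lia). rewrite Nat.eqb_refl. simpl. lia.
      * destruct (rid s + 1 =? rd), (rid s =? rd); simpl in *; lia.
    + apply Nat.eqb_neq in Hne. rewrite Hne in B. simpl in B. lia.
  - intros m Hm. apply in_app_or in Hm as [Hm|Hm].
    + apply (msg_wf_mono (register_ext _ _ _ _ G0) (incl_refl A) (incl_refl R)), (net_wf IC Hm).
    + apply in_bcast in Hm as (Hs & Hd & Hl & Hpl). unfold msg_wf. rewrite Hpl, Hs.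
      unfold g'. destruct ph as [k l' r|k r tv]; simpl.
      * destruct Hinvokes as [-> _]. rewrite Hl. repeat split; try lia. exists k; apply register_here.
      * split; [lia|]. exists k; apply register_here.
Qed.

Lemma witness_inv_invoke : witness_inv n c' tr' g' A R.
Proof.
  destruct I as [IG IC IW].
  apply witness_inv_app; [apply witness_inv_register; [exact (witness_inv_mono IW M)|exact G0|]| |].
  - intros k l1 r tv -> Hl. simpl in Hph_op; subst k.
    pose proof (label_op_bound IG Hl). simpl in *. unfold s in *. lia.
  - intros p k tv rd l1 r [H|[H|[]]]; [discriminate|].
    destruct ph as [|k' r' tv']; [discriminate|]. injection H as <- <- <-.
    intros Hg. apply register_cases in Hg as [(_ & _ & E)|Hg]; [discriminate|].
    specialize (old_phase_op _ _ Hg). simpl in *. lia.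
  - intros p k l1 res [H|[H|[]]]; [discriminate|destruct ph; discriminate].
Qed.

Lemma abd_inv_invoke : abd_inv n c' tr' g' A R.
Proof. split; [exact registry_inv_invoke|exact channel_inv_invoke|exact witness_inv_invoke]. Qed.
End Invoke.

Lemma abd_inv_read n c tr g A R i r s' ms ls :
  abd_inv n c tr g A R -> 1 <= i <= n -> busy (loc c i) = false ->
  inv_read n i r (loc c i) = (s', ms, ls) ->
  abd_inv n (mkC (updf (loc c) i s') (net c ++ ms)) (tr ++ ls)
    (register g i (rid (loc c i) + 1) (QueryPhase (opcnt (loc c i)) (lt (loc c i) + 1) r)) A R.
Proof.
  intros I Hi Hidle H. injection H as <- <- <-.
  apply (abd_inv_invoke n c tr g A R i true r (ORead r) (QueryPhase (opcnt (loc c i)) (lt (loc c i) + 1) r));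
    simpl; auto.
  intros k l r' E; injection E; auto.
Qed.

Lemma abd_inv_write n c tr g A R i r v s' ms ls :
  abd_inv n c tr g A R -> 1 <= i <= n -> busy (loc c i) = false ->
  inv_write n i r v (loc c i) = (s', ms, ls) ->
  abd_inv n (mkC (updf (loc c) i s') (net c ++ ms)) (tr ++ ls)
    (register g i (rid (loc c i) + 1) (UpdatePhase (opcnt (loc c i)) r ((lt (loc c i) + 1, i), v))) A R.
Proof.
  intros I Hi Hidle H. injection H as <- <- <-.
  apply (abd_inv_invoke n c tr g A R i false (rreg (loc c i)) (OWrite r v)
    (UpdatePhase (opcnt (loc c i)) r ((lt (loc c i) + 1, i), v))); simpl; auto.
  discriminate.
Qed.

Lemma msg_wf_in_net {n c tr g A R pre m post} :
  abd_inv n c tr g A R -> net c = pre ++ m :: post -> msg_wf n g A R m.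
Proof. intros I Hn; apply (net_wf (inv_channel I)); rewrite Hn; apply in_or_app; simpl; auto. Qed.

Section DeliverQuery.
Variables (n : nat) (c : config) (tr : list label) (g : registry) (A : list ack_event)
  (R : list resp_event) (pre post : list msg) (m : msg) (rd r : nat).
Hypothesis I : abd_inv n c tr g A R.
Hypothesis Hnet : net c = pre ++ m :: post.
Hypothesis Hpl : pl m = Query rd r.

Let q := dst m.
Let s := loc c q.
Let l := Nat.max (lt s) (mlt m) + 1.
Let s' := mkL l (rid s) (tvps s) (resps s) (reading s) (rreg s) (rval s) (busy s) (opcnt s) (crashed s).
Let c' := mkC (updf (loc c) q s') (pre ++ post ++ [mkM q (src m) l (Response rd (tvps s r))]).
Let ev := RespEvent q (src m) rd r l (tvps s r).

Let M : lstate_mono (loc c) (loc c').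
Proof. apply lstate_mono_updf; unfold s', l, s; simpl; try lia; intros; apply ts_le_refl. Qed.

Let Hm : 1 <= src m <= n /\ 1 <= q <= n /\ exists k, g (src m) rd = Some (QueryPhase k (mlt m) r).
Proof. pose proof (msg_wf_in_net I Hnet) as H; unfold msg_wf in H; rewrite Hpl in H; exact H. Qed.

Lemma channel_inv_deliver_query : channel_inv n c' g A (ev :: R).
Proof.
  apply (channel_inv_local_step (inv_channel I)); auto using incl_refl, incl_tl.
  - intros p; simpl; case_proc p q; repeat split; unfold s', l, s; simpl; lia.
  - intros q' p rd'. simpl; rewrite Hnet, !filter_app, !length_app; simpl.
    replace (query_round_msg q' p rd' _) with (query_round_msg q' p rd' m).
    + destruct (query_round_msg q' p rd' m); simpl; lia.
    + unfold query_round_msg; simpl; rewrite Hpl; fold q.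
      destruct (src m =? p), (q =? q'), (rd =? rd'); reflexivity.
  - intros x Hx. simpl in Hx; rewrite app_assoc in Hx. apply in_app_or in Hx as [Hx|[<-|[]]].
    + apply (msg_wf_mono (fun _ _ _ H => H) (incl_refl A) (incl_tl ev (incl_refl R))).
      apply (net_wf (inv_channel I)). rewrite Hnet. apply in_app_insert, Hx.
    + simpl. split; [apply Hm|]. exists r; left; reflexivity.
Qed.

Lemma witness_inv_deliver_query : witness_inv n c' tr g A (ev :: R).
Proof.
  destruct I as [IG IC IW].
  apply witness_inv_add_resp; [exact (witness_inv_mono IW M)| | |].
  - simpl. rewrite updf_eq; simpl; lia.
  - destruct Hm as (_ & _ & k & Hg). exists k, (mlt m); split; [exact Hg|simpl; unfold l; lia].
  - intros a Ha Eq Er _. destruct (acks_stored IW Ha) as (_ & Hle & _).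
    simpl in Eq, Er. rewrite Eq, Er in Hle. exact Hle.
Qed.

Lemma abd_inv_deliver_query s'' ms ls :
  deliver n q s m = (s'', ms, ls) ->
  abd_inv n (mkC (updf (loc c) q s'') (pre ++ post ++ ms)) (tr ++ ls) g A (ev :: R).
Proof.
  unfold deliver; rewrite Hpl; intros H; injection H as <- <- <-. rewrite app_nil_r.
  split; [exact (registry_inv_mono (inv_registry I) M)|exact channel_inv_deliver_query
         |exact witness_inv_deliver_query].
Qed.
End DeliverQuery.

Section DeliverUpdate.
Variables (n : nat) (c : config) (tr : list label) (g : registry) (A : list ack_event)
  (R : list resp_event) (pre post : list msg) (m : msg) (rd r : nat) (tv : tsv).
Hypothesis I : abd_inv n c tr g A R.
Hypothesis Hnet : net c = pre ++ m :: post.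
Hypothesis Hpl : pl m = Update rd r tv.

Let q := dst m.
Let s := loc c q.
Let l := Nat.max (lt s) (mlt m) + 1.
Let tvps' := fun r' => if r' =? r then tsv_max (tvps s r) tv else tvps s r'.
Let s' := mkL l (rid s) tvps' (resps s) (reading s) (rreg s) (rval s) (busy s) (opcnt s) (crashed s).
Let c' := mkC (updf (loc c) q s') (pre ++ post ++ [mkM q (src m) l (Ack rd)]).
Let ev := AckEvent q (src m) rd r tv l.

Let M : lstate_mono (loc c) (loc c').
Proof.
  apply lstate_mono_updf; unfold s', l, s; simpl; try lia.
  intros r'; unfold tvps'. destruct (Nat.eqb_spec r' r) as [->|_]; [apply tsv_max_ge_l|apply ts_le_refl].
Qed.

Let Hm : 1 <= q <= n /\ exists k, g (src m) rd = Some (UpdatePhase k r tv).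
Proof. pose proof (msg_wf_in_net I Hnet) as H; unfold msg_wf in H; rewrite Hpl in H; exact H. Qed.

Lemma channel_inv_deliver_update : channel_inv n c' g (ev :: A) R.
Proof.
  apply (channel_inv_local_step (inv_channel I)); auto using incl_refl, incl_tl.
  - intros p; simpl; case_proc p q; repeat split; unfold s', l, s; simpl; lia.
  - intros q' p rd'. simpl; rewrite Hnet, !filter_app, !length_app; simpl.
    assert (E : query_round_msg q' p rd' m = false) by (unfold query_round_msg; rewrite Hpl; reflexivity).
    rewrite E; simpl; lia.
  - intros x Hx. simpl in Hx; rewrite app_assoc in Hx. apply in_app_or in Hx as [Hx|[<-|[]]].
    + apply (msg_wf_mono (fun _ _ _ H => H) (incl_tl ev (incl_refl A)) (incl_refl R)).
      apply (net_wf (inv_channel I)). rewrite Hnet. apply in_app_insert, Hx.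
    + simpl. split; [apply Hm|]. exists r, tv; left; reflexivity.
Qed.

Lemma witness_inv_deliver_update : witness_inv n c' tr g (ev :: A) R.
Proof.
  destruct I as [IG IC IW].
  apply witness_inv_add_ack; [exact (witness_inv_mono IW M)| | | |].
  - simpl. rewrite updf_eq; simpl; lia.
  - simpl. rewrite updf_eq; simpl. unfold tvps'. rewrite Nat.eqb_refl. apply tsv_max_ge_r.
  - exact (proj2 Hm).
  - intros x Hx Eq _ Hlt. destruct (responses_after_query IW Hx) as [Hle _].
    simpl in Eq, Hlt. rewrite <- Eq in Hle. fold q s in Hle. unfold l in Hlt. lia.
Qed.

Lemma abd_inv_deliver_update s'' ms ls :
  deliver n q s m = (s'', ms, ls) ->
  abd_inv n (mkC (updf (loc c) q s'') (pre ++ post ++ ms)) (tr ++ ls) g (ev :: A) R.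
Proof.
  unfold deliver; rewrite Hpl; intros H; injection H as <- <- <-. rewrite app_nil_r.
  split; [exact (registry_inv_mono (inv_registry I) M)|exact channel_inv_deliver_update
         |exact witness_inv_deliver_update].
Qed.
End DeliverUpdate.

Lemma entry_eqb_sender e e' : entry_eqb e e' = true -> entry_sender e = entry_sender e'.
Proof.
  destruct e, e'; simpl; try discriminate; [intros H; apply andb_prop in H as [_ H]|intros H];
    apply Nat.eqb_eq; exact H.
Qed.

Lemma set_add_new e l : ~ In (entry_sender e) (map entry_sender l) -> set_add e l = e :: l.
Proof.
  intros Hn; unfold set_add. destruct (existsb (entry_eqb e) l) eqn:E; [|reflexivity].
  apply existsb_exists in E as [e' [He' Eq]]. exfalso; apply Hn.
  rewrite (entry_eqb_sender _ _ Eq); apply in_map, He'.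
Qed.

Lemma in_resp_tsvs tv j l : In (EResp tv j) l -> In tv (resp_tsvs l).
Proof.
  induction l as [|a l IH]; simpl; [tauto|]. intros [->|H]; [simpl; auto|apply in_or_app; auto].
Qed.

Lemma response_current_round {n c tr g A R pre m post rd tv} :
  abd_inv n c tr g A R -> net c = pre ++ m :: post -> pl m = Response rd tv ->
  rid (loc c (dst m)) = rd ->
  exists k l, g (dst m) rd = Some (QueryPhase k l (rreg (loc c (dst m)))).
Proof.
  intros I Hn Hpl Hrid. pose proof (msg_wf_in_net I Hn) as H; unfold msg_wf in H; rewrite Hpl in H.
  destruct H as [_ [r Hr]]. destruct (responses_after_query (inv_witness I) Hr) as [_ [k [l [Hg _]]]].
  simpl in Hg. exists k, l. rewrite <- Hrid in Hg |- *.
  rewrite ((proj2 (proj2 (current_phase (inv_channel I) Hg))) k l r eq_refl). exact Hg.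
Qed.

Section DeliverResponse.
Variables (n : nat) (c : config) (tr : list label) (g : registry) (A : list ack_event)
  (R : list resp_event) (pre post : list msg) (m : msg) (rd : nat) (tv : tsv) (k0 l0 : nat).
Hypothesis I : abd_inv n c tr g A R.
Hypothesis Hnet : net c = pre ++ m :: post.
Hypothesis Hpl : pl m = Response rd tv.
Hypothesis Hrid : rid (loc c (dst m)) = rd.
Hypothesis Hg0 : g (dst m) rd = Some (QueryPhase k0 l0 (rreg (loc c (dst m)))).

Let p := dst m.
Let q := src m.
Let s := loc c p.
Let l := Nat.max (lt s) (mlt m) + 1.
Let rs := EResp tv q :: resps s.

Let Hrid_s : rid s = rd.
Proof. exact Hrid. Qed.

Let Hm : 1 <= q <= n /\ exists r, In (RespEvent q p rd r (mlt m) tv) R.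
Proof. pose proof (msg_wf_in_net I Hnet) as H; unfold msg_wf in H; rewrite Hpl in H; exact H. Qed.

Let Hround : busy s = true /\ k0 = opcnt s - 1 /\ 1 <= opcnt s.
Proof.
  destruct I as [IG IC _].
  rewrite <- Hrid in Hg0. destruct (current_phase IC Hg0) as (Hb & Hk & _).
  destruct (registry_bound IG Hg0) as [_ Hop]. simpl in *. fold p s in Hb, Hk, Hop.
  repeat split; auto; lia.
Qed.

Let old_responses e : In e (resps s) -> entry_wf n A R p s e /\ exists tv', e = EResp tv' (entry_sender e).
Proof.
  destruct I as [_ IC IW]. intros He. pose proof (resps_wf IC He) as X. split; [exact X|].
  destruct e as [tv' j|j]; [eauto|exfalso]. destruct X as [_ [r' [tv' [la [_ Ha]]]]].
  destruct (acks_stored IW Ha) as [_ [_ [k' Ga]]]. simpl in Ga. unfold s, p in Ga.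
  rewrite Hrid, Hg0 in Ga. discriminate.
Qed.

Let round_msg_m : query_round_msg q p rd m = true.
Proof. unfold query_round_msg; rewrite Hpl; fold p q; rewrite !Nat.eqb_refl; reflexivity. Qed.

Let round_count q' :
  length (filter (query_round_msg q' p rd) (pre ++ m :: post)) +
  length (filter (is_resp_from q') (resps s)) <= 1.
Proof.
  pose proof (query_round_single (inv_channel I) q' p rd) as C.
  unfold p in C. rewrite Hnet, Hrid, Nat.eqb_refl in C. exact C.
Qed.

(* [m] is still in transit, so [query_round_single] leaves no room for an earlier answer of [q]. *)
Let q_fresh : ~ In q (map entry_sender (resps s)).
Proof.
  intros Hq. apply in_map_iff in Hq as [e [Es He]]. destruct (old_responses e He) as [_ [tv' Ee]].
  rewrite Es in Ee; subst e. pose proof (round_count q) as C.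
  rewrite filter_app, length_app in C; simpl in C; rewrite round_msg_m in C; simpl in C.
  pose proof (filter_length_pos (is_resp_from q) _ _ He ltac:(apply Nat.eqb_refl)). lia.
Qed.

Lemma set_add_response : set_add (EResp tv q) (resps s) = rs.
Proof. apply set_add_new, q_fresh. Qed.

Let collected_wf e : In e rs -> entry_wf n A R p s e /\ exists tv', e = EResp tv' (entry_sender e).
Proof.
  intros [<-|He]; [|exact (old_responses e He)].
  simpl. rewrite Hrid_s. destruct Hm as [Hq [r Hr]]. split; [split; [exact Hq|eauto]|eauto].
Qed.

Let collected_nodup : NoDup (map entry_sender rs).
Proof. constructor; [exact q_fresh|apply (resps_senders_nodup (inv_channel I))]. Qed.

Let collected_count q' :
  length (filter (query_round_msg q' p rd) (pre ++ post)) + length (filter (is_resp_from q') rs) <= 1.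
Proof.
  pose proof (round_count q') as C. rewrite !filter_app, !length_app in *. simpl in *.
  destruct (Nat.eqb_spec q q') as [<-|Hne].
  - rewrite round_msg_m in C. simpl in *. lia.
  - destruct (query_round_msg q' p rd m); simpl in *; lia.
Qed.

Let s_wait := mkL l (rid s) (tvps s) rs (reading s) (rreg s) (rval s) (busy s) (opcnt s) (crashed s).
Let c_wait := mkC (updf (loc c) p s_wait) (pre ++ post).

Let M_wait : lstate_mono (loc c) (loc c_wait).
Proof. apply lstate_mono_updf; unfold s_wait, l, s; simpl; try lia; intros; apply ts_le_refl. Qed.

Lemma channel_inv_collect_response : channel_inv n c_wait g A R.
Proof.
  destruct I as [IG IC IW]. destruct Hround as (Hb & _ & _).
  split; simpl.
  - intros p'. case_proc p' p; [rewrite Hb; discriminate|apply IC].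
  - intros p' ph. case_proc p' p; apply IC.
  - intros p' e. case_proc p' p; [|apply IC].
    intros He. destruct (collected_wf e He) as [X _].
    apply (entry_wf_mono X); auto using incl_refl. unfold s_wait, l; simpl; lia.
  - intros p'. case_proc p' p; [exact collected_nodup|apply IC].
  - intros q' p' rd'. pose proof (query_round_single IC q' p' rd') as C.
    rewrite Hnet, !filter_app, !length_app in C. simpl in C. rewrite filter_app, length_app.
    case_proc p' p.
    + fold s in C. rewrite Hrid_s in *. destruct (Nat.eqb_spec rd rd') as [E|_]; [subst rd'|].
      * pose proof (collected_count q') as X.
        rewrite filter_app, length_app in X. unfold rs in X; simpl in X. lia.
      * destruct (query_round_msg q' p rd' m); simpl in C; lia.
    + destruct (query_round_msg q' p' rd' m); simpl in C; lia.
  - intros x Hx. apply (net_wf IC). rewrite Hnet. apply in_app_insert, Hx.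
Qed.

Lemma abd_inv_collect_response :
  abd_inv n c_wait tr g A R.
Proof.
  split; [exact (registry_inv_mono (inv_registry I) M_wait)|exact channel_inv_collect_response
         |exact (witness_inv_mono (inv_witness I) M_wait)].
Qed.

Let tm := list_max_tsv (resp_tsvs rs).
Let s_upd := mkL l (rid s + 1) (tvps s) [] (reading s) (rreg s) (snd tm) (busy s) (opcnt s) (crashed s).
Let c_upd := mkC (updf (loc c) p s_upd) (pre ++ post ++ bcast n p l (Update (rid s + 1) (rreg s) tm)).
Let g_upd := register g p (rid s + 1) (UpdatePhase (opcnt s - 1) (rreg s) tm).
Let tr_upd := tr ++ [LUpd p (opcnt s - 1) tm].

Let M_upd : lstate_mono (loc c) (loc c_upd).
Proof. apply lstate_mono_updf; unfold s_upd, l, s; simpl; try lia; intros; apply ts_le_refl. Qed.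

Let G1 : g p (rid s + 1) = None.
Proof. apply (registry_fresh (inv_registry I)); unfold s; lia. Qed.

Let Hg0' : g p rd = Some (QueryPhase (opcnt s - 1) l0 (rreg s)).
Proof. destruct Hround as (_ & <- & _). exact Hg0. Qed.

Let in_tr_upd lab : In lab tr_upd -> In lab tr \/ lab = LUpd p (opcnt s - 1) tm.
Proof. intros H; apply in_app_or in H as [H|[H|[]]]; auto. Qed.

Let registered_rid_bound rd' ph : g p rd' = Some ph -> rd' <= rd.
Proof. intros H; rewrite <- Hrid; apply (registry_bound (inv_registry I) H). Qed.

Let no_update_phase_yet rd' r tv' : g p rd' = Some (UpdatePhase (opcnt s - 1) r tv') -> False.
Proof.
  intros H. pose proof (query_before_update (inv_registry I) Hg0' H).
  specialize (registered_rid_bound _ _ H). lia.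
Qed.

Lemma registry_inv_response_quorum : registry_inv c_upd tr_upd g_upd.
Proof.
  destruct I as [IG _ _]. destruct Hround as (_ & _ & Hop). pose proof (registry_inv_mono IG M_upd) as IG'.
  split.
  - intros p' rd' ph H. apply register_cases in H as [(-> & -> & ->)|H]; [|apply (registry_bound IG' H)].
    simpl; rewrite updf_eq; simpl; lia.
  - intros lab H. apply in_tr_upd in H as [H| ->]; [apply (label_op_bound IG' H)|].
    simpl; rewrite updf_eq; simpl; lia.
  - intros p' k l1 o l2 o' H1 H2.
    apply in_tr_upd in H1 as [H1|H1]; [|discriminate]. apply in_tr_upd in H2 as [H2|H2]; [|discriminate].
    exact (invocation_unique IG H1 H2).
  - intros p' rd' k l1 r H. apply register_cases in H as [(_ & _ & H)|H]; [discriminate|].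
    apply in_or_app; left; exact (query_phase_invoked IG H).
  - intros p' rd' k r tv' H. apply register_cases in H as [(-> & -> & H)|H].
    + injection H as -> -> _. exists l0, (ORead (rreg s)).
      split; [apply in_or_app; left; exact (query_phase_invoked IG Hg0')|reflexivity].
    + destruct (update_phase_invoked IG H) as [l1 [o [Hl Ho]]].
      exists l1, o; split; [apply in_or_app|]; auto.
  - intros p' rd1 rd2 k r r' tv1 tv2 H1 H2.
    apply register_cases in H1 as [(-> & -> & E1)|H1]; apply register_cases in H2 as [(E & -> & E2)|H2];
      try reflexivity; [injection E1 as -> _ _|subst p'; injection E2 as -> _ _|]; try solve [exfalso; eauto].
    exact (update_phase_unique IG H1 H2).
  - intros p' rd1 rd2 k l1 r l2 r' H1 H2.
    apply register_cases in H1 as [(_ & _ & H1)|H1]; [discriminate|].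
    apply register_cases in H2 as [(_ & _ & H2)|H2]; [discriminate|].
    exact (query_phase_unique IG H1 H2).
  - intros p' rd1 rd2 k l1 r r' tv' H1 H2.
    apply register_cases in H1 as [(_ & _ & H1)|H1]; [discriminate|].
    apply register_cases in H2 as [(-> & -> & _)|H2]; [|exact (query_before_update IG H1 H2)].
    specialize (registered_rid_bound _ _ H1). lia.
  - intros p' k H. apply in_tr_upd in H as [H|H]; [|discriminate].
    destruct (query_label_registered IG H) as [rd' [l1 [r Hg]]].
    exists rd', l1, r. apply register_ext; auto.
  - intros p' k tv' H. apply in_tr_upd in H as [H|H].
    + destruct (update_label_registered IG H) as [rd' [r Hg]].
      exists rd', r. apply register_ext; auto.
    + injection H as -> -> ->. exists (rid s + 1), (rreg s). apply register_here.
Qed.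

Lemma channel_inv_response_quorum : channel_inv n c_upd g_upd A R.
Proof.
  destruct I as [IG IC IW]. destruct Hround as (Hb & _ & _).
  split; simpl.
  - intros p'. case_proc p' p; [rewrite Hb; discriminate|].
    intros Hb'. destruct (idle_clear IC Hb'). unfold g_upd; rewrite register_other; auto.
  - intros p' ph. case_proc p' p.
    + unfold g_upd; rewrite register_here. intros H; injection H as <-.
      repeat split; [exact Hb|discriminate].
    + unfold g_upd; rewrite register_other by auto. apply IC.
  - intros p' e. case_proc p' p; [intros []|apply IC].
  - intros p'. case_proc p' p; [constructor|apply IC].
  - intros q' p' rd'. pose proof (query_round_single IC q' p' rd') as C.
    rewrite Hnet in C. rewrite !filter_app, !length_app, bcast_update_round_msgs in *. simpl in *.
    case_proc p' p.
    + destruct (Nat.eqb_spec (rid s + 1) rd') as [<-|_].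
      * pose proof (query_round_msgs_fresh q' I (p := p) (rd := rid s + 1) ltac:(unfold s; lia)) as F.
        rewrite Hnet, !filter_app in F. simpl in F.
        destruct (filter (query_round_msg q' p (rid s + 1)) pre),
          (filter (query_round_msg q' p (rid s + 1)) post), (query_round_msg q' p (rid s + 1) m);
          simpl in *; try discriminate; lia.
      * destruct (rid (loc c p) =? rd'), (query_round_msg q' p rd' m); simpl in C; lia.
    + destruct (query_round_msg q' p' rd' m); simpl in C; lia.
  - intros x Hx. rewrite app_assoc in Hx. apply in_app_or in Hx as [Hx|Hx].
    + apply (msg_wf_mono (register_ext _ _ _ _ G1) (incl_refl A) (incl_refl R)), (net_wf IC).
      rewrite Hnet. apply in_app_insert, Hx.
    + apply in_bcast in Hx as (Hs & Hd & _ & Hpl'). unfold msg_wf. rewrite Hpl', Hs.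
      split; [exact Hd|]. exists (opcnt s - 1). apply register_here.
Qed.

Lemma response_quorum_certificate (Hquorum : length rs = maj n) :
  queries_certified n [LUpd p (opcnt s - 1) tm] g_upd R.
Proof.
  destruct I as [IG _ IW].
  intros p' k tv' rd' l' r' [H|[]] Hg. injection H as <- <- <-.
  apply register_cases in Hg as [(_ & _ & E)|Hg]; [discriminate|].
  pose proof (query_phase_unique IG Hg Hg0') as ->. rewrite Hg0' in Hg. injection Hg as <- <-.
  exists (map entry_sender rs). split; [split; [exact collected_nodup|split]|].
  - rewrite length_map; exact Hquorum.
  - intros q' Hq'. apply in_map_iff in Hq' as [e [<- He]].
    destruct (collected_wf e He) as [X [tv'' Ee]]. rewrite Ee in X. apply X.
  - intros q' Hq'. apply in_map_iff in Hq' as [e [<- He]].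
    destruct (collected_wf e He) as [X [tv'' Ee]]. rewrite Ee in He, X. simpl in X.
    destruct X as [_ [r'' [lr HR]]]. rewrite Hrid_s in HR.
    destruct (responses_after_query IW HR) as [_ [k2 [l2 [G2 L2]]]]. simpl in G2, L2.
    rewrite Hg0' in G2. injection G2 as <- <- <-.
    exists lr, tv''. split; [exact L2|split; [exact HR|]].
    apply list_max_tsv_ge. eapply in_resp_tsvs; eauto.
Qed.

Lemma witness_inv_response_quorum (Hquorum : length rs = maj n) :
  witness_inv n c_upd tr_upd g_upd A R.
Proof.
  destruct I as [_ _ IW].
  apply witness_inv_app; [apply witness_inv_register; [exact (witness_inv_mono IW M_upd)|exact G1|]| |].
  - discriminate.
  - exact (response_quorum_certificate Hquorum).
  - intros ? ? ? ? [H|[]]; discriminate.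
Qed.

Lemma abd_inv_deliver_response s'' ms ls :
  deliver n p s m = (s'', ms, ls) ->
  exists g', abd_inv n (mkC (updf (loc c) p s'') (pre ++ post ++ ms)) (tr ++ ls) g' A R.
Proof.
  unfold deliver; rewrite Hpl, (proj2 (Nat.eqb_eq _ _) Hrid_s); fold q; rewrite set_add_response.
  destruct (Nat.eqb_spec (length rs) (maj n)) as [Hq|_]; intros H; injection H as <- <- <-.
  - exists g_upd. split; [exact registry_inv_response_quorum|exact channel_inv_response_quorum
                         |exact (witness_inv_response_quorum Hq)].
  - exists g. rewrite !app_nil_r. exact abd_inv_collect_response.
Qed.
End DeliverResponse.

Lemma registry_inv_app_resp c tr g p k l res :
  registry_inv c tr g -> k < opcnt (loc c p) -> registry_inv c (tr ++ [LResp p k l res]) g.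
Proof.
  intros IG Hk.
  assert (in_tr : forall lab, In lab (tr ++ [LResp p k l res]) -> In lab tr \/ lab = LResp p k l res)
    by (intros lab H; apply in_app_or in H as [H|[H|[]]]; auto).
  split; try apply IG.
  - intros lab H. apply in_tr in H as [H| ->]; [apply (label_op_bound IG H)|exact Hk].
  - intros p' k' l1 o l2 o' H1 H2.
    apply in_tr in H1 as [H1|H1]; [|discriminate]. apply in_tr in H2 as [H2|H2]; [|discriminate].
    exact (invocation_unique IG H1 H2).
  - intros p' rd k' l1 r H. apply in_or_app; left; exact (query_phase_invoked IG H).
  - intros p' rd k' r tv H. destruct (update_phase_invoked IG H) as [l1 [o [Hl Ho]]].
    exists l1, o; split; [apply in_or_app|]; auto.
  - intros p' k' H. apply in_tr in H as [H|H]; [exact (query_label_registered IG H)|discriminate].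
  - intros p' k' tv H. apply in_tr in H as [H|H]; [exact (update_label_registered IG H)|discriminate].
Qed.

Lemma ack_current_round {n c tr g A R pre m post rd} :
  abd_inv n c tr g A R -> net c = pre ++ m :: post -> pl m = Ack rd ->
  exists k r tv, g (dst m) rd = Some (UpdatePhase k r tv).
Proof.
  intros I Hn Hpl. pose proof (msg_wf_in_net I Hn) as H; unfold msg_wf in H; rewrite Hpl in H.
  destruct H as [_ [r [tv Ha]]]. destruct (acks_stored (inv_witness I) Ha) as [_ [_ [k Hg]]].
  exists k, r, tv; exact Hg.
Qed.

Section DeliverAck.
Variables (n : nat) (c : config) (tr : list label) (g : registry) (A : list ack_event)
  (R : list resp_event) (pre post : list msg) (m : msg) (rd k0 r0 : nat) (tv0 : tsv).
Hypothesis I : abd_inv n c tr g A R.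
Hypothesis Hnet : net c = pre ++ m :: post.
Hypothesis Hpl : pl m = Ack rd.
Hypothesis Hrid : rid (loc c (dst m)) = rd.
Hypothesis Hg0 : g (dst m) rd = Some (UpdatePhase k0 r0 tv0).

Let p := dst m.
Let q := src m.
Let s := loc c p.
Let l := Nat.max (lt s) (mlt m) + 1.
Let rs := set_add (EAck q) (resps s).

Let Hrid_s : rid s = rd.
Proof. exact Hrid. Qed.

Let Hround : busy s = true /\ k0 = opcnt s - 1 /\ 1 <= opcnt s.
Proof.
  destruct I as [IG IC _].
  rewrite <- Hrid in Hg0. destruct (current_phase IC Hg0) as (Hb & Hk & _).
  destruct (registry_bound IG Hg0) as [_ Hop]. simpl in *. unfold s, p. repeat split; auto; lia.
Qed.

Let ack_of_round j r tv la : In (AckEvent j p rd r tv la) A -> r = r0 /\ tv = tv0.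
Proof.
  intros Ha. destruct (acks_stored (inv_witness I) Ha) as [_ [_ [k Hg]]]. simpl in Hg.
  unfold p in Hg. rewrite Hg0 in Hg. injection Hg; auto.
Qed.

Let old_acks e : In e (resps s) ->
  e = EAck (entry_sender e) /\ 1 <= entry_sender e <= n /\
  exists la, la < lt s /\ In (AckEvent (entry_sender e) p rd r0 tv0 la) A.
Proof.
  destruct I as [_ IC IW]. intros He. pose proof (resps_wf IC He) as X.
  destruct e as [tv' j|j].
  - exfalso. destruct X as [_ [r' [lr Hr]]].
    destruct (responses_after_query IW Hr) as [_ [k' [l' [Gr _]]]]. simpl in Gr.
    unfold s, p in Gr. rewrite Hrid, Hg0 in Gr. discriminate.
  - destruct X as [Hj [r [tv [la [Hla Ha]]]]]. unfold s, p in Ha. rewrite Hrid in Ha.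
    destruct (ack_of_round _ _ _ _ Ha) as [-> ->]. split; [reflexivity|]. eauto.
Qed.

Let collected e : In e rs ->
  e = EAck (entry_sender e) /\ 1 <= entry_sender e <= n /\
  exists la, la < l /\ In (AckEvent (entry_sender e) p rd r0 tv0 la) A.
Proof.
  intros He. assert (Hin : In e (EAck q :: resps s)).
  { unfold rs, set_add in He. destruct existsb; auto. right; exact He. }
  destruct Hin as [<-|He'].
  - pose proof (msg_wf_in_net I Hnet) as H; unfold msg_wf in H; rewrite Hpl in H.
    destruct H as [Hq [r [tv Ha]]]. destruct (ack_of_round _ _ _ _ Ha) as [-> ->].
    split; [reflexivity|split; [exact Hq|]]. exists (mlt m); split; [unfold l; lia|exact Ha].
  - destruct (old_acks e He') as (Ee & Hj & la & Hla & Ha).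
    split; [exact Ee|split; [exact Hj|]]. exists la; split; [unfold l; lia|exact Ha].
Qed.

Let collected_nodup : NoDup (map entry_sender rs).
Proof.
  pose proof (resps_senders_nodup (inv_channel I) p) as N. fold s in N.
  unfold rs, set_add. destruct (existsb (entry_eqb (EAck q)) (resps s)) eqn:Ex; [exact N|].
  constructor; [|exact N]. intros Hq. apply in_map_iff in Hq as [e [Es He]].
  destruct (old_acks e He) as [Ee _]. rewrite Es in Ee; subst e.
  assert (existsb (entry_eqb (EAck q)) (resps s) = true) as T; [|congruence].
  apply existsb_exists. exists (EAck q); split; [exact He|apply Nat.eqb_refl].
Qed.

Let no_responses q' : filter (is_resp_from q') rs = [].
Proof.
  apply filter_none. intros e He. destruct (collected e He) as [Ee _]. rewrite Ee; reflexivity.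
Qed.

Let round_msg_m q' p' rd' : query_round_msg q' p' rd' m = false.
Proof. unfold query_round_msg; rewrite Hpl; reflexivity. Qed.

Let s_wait := mkL l (rid s) (tvps s) rs (reading s) (rreg s) (rval s) (busy s) (opcnt s) (crashed s).
Let c_wait := mkC (updf (loc c) p s_wait) (pre ++ post).

Let M_wait : lstate_mono (loc c) (loc c_wait).
Proof. apply lstate_mono_updf; unfold s_wait, l, s; simpl; try lia; intros; apply ts_le_refl. Qed.

Lemma channel_inv_collect_ack : channel_inv n c_wait g A R.
Proof.
  destruct I as [IG IC IW]. destruct Hround as (Hb & _ & _).
  split; simpl.
  - intros p'. case_proc p' p; [rewrite Hb; discriminate|apply IC].
  - intros p' ph. case_proc p' p; apply IC.
  - intros p' e. case_proc p' p; [|apply IC].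
    intros He. destruct (collected e He) as (Ee & Hj & la & Hla & Ha). rewrite Ee. simpl.
    split; [exact Hj|]. exists r0, tv0, la. rewrite Hrid_s. auto.
  - intros p'. case_proc p' p; [exact collected_nodup|apply IC].
  - intros q' p' rd'. pose proof (query_round_single IC q' p' rd') as C.
    rewrite Hnet, !filter_app, !length_app in C. simpl in C. rewrite round_msg_m in C.
    rewrite filter_app, length_app. case_proc p' p.
    + rewrite no_responses. simpl. destruct (rid s =? rd'); lia.
    + lia.
  - intros x Hx. apply (net_wf IC). rewrite Hnet. apply in_app_insert, Hx.
Qed.

Lemma abd_inv_collect_ack : abd_inv n c_wait tr g A R.
Proof.
  split; [exact (registry_inv_mono (inv_registry I) M_wait)|exact channel_inv_collect_ack
         |exact (witness_inv_mono (inv_witness I) M_wait)].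
Qed.

Let res := if reading s then Some (rval s) else None.
Let s_done := mkL l (rid s + 1) (tvps s) [] (reading s) (rreg s) (rval s) false (opcnt s) (crashed s).
Let c_done := mkC (updf (loc c) p s_done) (pre ++ post).
Let tr_done := tr ++ [LResp p (opcnt s - 1) l res].

Let M_done : lstate_mono (loc c) (loc c_done).
Proof. apply lstate_mono_updf; unfold s_done, l, s; simpl; try lia; intros; apply ts_le_refl. Qed.

Let G1 : g p (rid s + 1) = None.
Proof. apply (registry_fresh (inv_registry I)); unfold s; lia. Qed.

Lemma channel_inv_ack_quorum : channel_inv n c_done g A R.
Proof.
  destruct I as [IG IC IW].
  split; simpl.
  - intros p'. case_proc p' p; [auto|apply IC].
  - intros p' ph. case_proc p' p; [rewrite G1; discriminate|apply IC].
  - intros p' e. case_proc p' p; [intros []|apply IC].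
  - intros p'. case_proc p' p; [constructor|apply IC].
  - intros q' p' rd'. pose proof (query_round_single IC q' p' rd') as C.
    rewrite Hnet, !filter_app, !length_app in C. simpl in C. rewrite round_msg_m in C.
    rewrite filter_app, length_app. case_proc p' p.
    + destruct (Nat.eqb_spec (rid s + 1) rd') as [<-|_].
      * pose proof (query_round_msgs_fresh q' I (p := p) (rd := rid s + 1) ltac:(unfold s; lia)) as F.
        rewrite Hnet, !filter_app in F. simpl in F. rewrite round_msg_m in F.
        destruct (filter (query_round_msg q' p (rid s + 1)) pre),
          (filter (query_round_msg q' p (rid s + 1)) post); simpl in *; try discriminate; lia.
      * destruct (rid (loc c p) =? rd'); simpl in *; lia.
    + lia.
  - intros x Hx. apply (net_wf IC). rewrite Hnet. apply in_app_insert, Hx.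
Qed.

Lemma ack_quorum_certificate (Hquorum : length rs = maj n) :
  responses_certified n [LResp p (opcnt s - 1) l res] g A.
Proof.
  intros p' k l' res' [H|[]]. injection H as <- <- <- _.
  destruct Hround as (_ & <- & _).
  exists rd, r0, tv0. split; [exact Hg0|].
  exists (map entry_sender rs). split; [split; [exact collected_nodup|split]|].
  - rewrite length_map; exact Hquorum.
  - intros q' Hq'. apply in_map_iff in Hq' as [e [<- He]]. apply (collected e He).
  - intros q' Hq'. apply in_map_iff in Hq' as [e [<- He]]. apply (collected e He).
Qed.

Lemma abd_inv_ack_quorum (Hquorum : length rs = maj n) : abd_inv n c_done tr_done g A R.
Proof.
  destruct I as [IG IC IW]. destruct Hround as (_ & _ & Hop).
  split.
  - apply registry_inv_app_resp; [exact (registry_inv_mono IG M_done)|simpl; rewrite updf_eq; simpl; lia].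
  - exact channel_inv_ack_quorum.
  - apply witness_inv_app; [exact (witness_inv_mono IW M_done)| |exact (ack_quorum_certificate Hquorum)].
    intros ? ? ? ? ? ? [H|[]]; discriminate.
Qed.

Lemma abd_inv_deliver_ack s'' ms ls :
  deliver n p s m = (s'', ms, ls) ->
  abd_inv n (mkC (updf (loc c) p s'') (pre ++ post ++ ms)) (tr ++ ls) g A R.
Proof.
  unfold deliver; rewrite Hpl, (proj2 (Nat.eqb_eq _ _) Hrid_s); fold q rs.
  destruct (Nat.eqb_spec (length rs) (maj n)) as [Hq|_]; intros H; injection H as <- <- <-;
    rewrite !app_nil_r; [exact (abd_inv_ack_quorum Hq)|exact abd_inv_collect_ack].
Qed.
End DeliverAck.

Lemma abd_inv_step {n c ls c' tr g A R} :
  abd_inv n c tr g A R -> step n c ls c' -> exists g' A' R', abd_inv n c' (tr ++ ls) g' A' R'.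
Proof.
  intros I S.
  destruct S as [c i r s' ms ls Hi _ Hb H|c i r v s' ms ls Hi _ Hb H|c pre m post s' ms ls Hn _ H|c i Hi _].
  - eexists _, _, _; eapply abd_inv_read; eauto.
  - eexists _, _, _; eapply abd_inv_write; eauto.
  - destruct (pl m) as [rd r|rd tv|rd r tv|rd] eqn:Hpl.
    + eexists _, _, _; eapply abd_inv_deliver_query; eauto.
    + destruct (Nat.eqb_spec (rid (loc c (dst m))) rd) as [Hrid|Hrid].
      * destruct (response_current_round I Hn Hpl Hrid) as [k0 [l0 Hg0]].
        edestruct abd_inv_deliver_response as [g' I']; eauto.
      * unfold deliver in H. rewrite Hpl in H. apply Nat.eqb_neq in Hrid. rewrite Hrid in H.
        injection H as <- <- <-. rewrite !app_nil_r. eexists _, _, _; eapply abd_inv_discard; eauto.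
    + eexists _, _, _; eapply abd_inv_deliver_update; eauto.
    + destruct (Nat.eqb_spec (rid (loc c (dst m))) rd) as [Hrid|Hrid].
      * destruct (ack_current_round I Hn Hpl) as [k0 [r0 [tv0 Hg0]]].
        eexists _, _, _; eapply abd_inv_deliver_ack; eauto.
      * unfold deliver in H. rewrite Hpl in H. apply Nat.eqb_neq in Hrid. rewrite Hrid in H.
        injection H as <- <- <-. rewrite !app_nil_r. eexists _, _, _; eapply abd_inv_discard; eauto.
  - rewrite app_nil_r. eexists _, _, _; eapply abd_inv_crash; eauto.
Qed.

Lemma abd_inv_exec {n c tr c'} : exec n c tr c' ->
  forall tr0 g A R, abd_inv n c tr0 g A R -> exists g' A' R', abd_inv n c' (tr0 ++ tr) g' A' R'.
Proof.
  induction 1 as [c|c ls c1 tr c2 S E IH]; intros tr0 g A R I.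
  - rewrite app_nil_r; eauto.
  - destruct (abd_inv_step I S) as [g1 [A1 [R1 I1]]].
    destruct (IH _ _ _ _ I1) as [g2 [A2 [R2 I2]]]. rewrite app_assoc; eauto.
Qed.

Theorem proposition1 (n f : nat) (tr : list label) (cf : config)
  (x p1 k1 p2 k2 : nat) :
  2 * f < n ->
  exec n init_config tr cf ->
  crashed_count n cf <= f ->
  complete tr ->
  op_on tr p1 k1 x -> op_on tr p2 k2 x ->
  contains_update_phase tr p1 k1 ->
  contains_query_phase tr p2 k2 ->
  precedes_lt tr p1 k1 p2 k2 ->
  forall t1 t2, ts_of tr p1 k1 t1 -> ts_of tr p2 k2 t2 -> ts_le t1 t2.
Proof.
  intros _ E _ _ H1 H2 _ HQ HP.
  destruct (abd_inv_exec E [] _ _ _ (abd_inv_init n)) as [g [A [R I]]].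
  exact (abd_inv_precedes_ts_le I H1 H2 HQ HP).
Qed.
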